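(* Let $(V,m)$ be a discrete measure space and $(b,c)$ a graph over $(V,m)$ satisfying (FC), i.e. $\widetilde L C_c(V)\subseteq\ell^2(V,m)$. Let $L$ be a non-negative selfadjoint operator on $\ell^2(V,m)$ with associated form $Q$. Then the following are equivalent: (i) $Q$ satisfies condition (C) with respect to $(b,c)$; (ii) $L$ is a restriction of $\widetilde L$.
   Context: $V$ is a finite or countably infinite set and $m:V\to(0,\infty)$; $(V,m)$ is a discrete measure space. $C(V)$ is the set of all functions $V\to\mathbb C$, $C_c(V)$ the finitely supported ones, and $\ell^2(V,m)$ carries $\langle u,v\rangle=\sum_x u(x)\overline{v(x)}m(x)$. A graph over $(V,m)$ is a pair $(b,c)$ with $c:V\to[0,\infty)$, $b:V\times V\to[0,\infty)$, $b(x,x)=0$, $b(x,y)=b(y,x)$, $\sum_y b(x,y)<\infty$. Let $\widetilde F=\{u\in C(V):\sum_y|b(x,y)u(y)|<\infty\ \forall x\}$ and $\widetilde L u(x)=\frac{1}{m(x)}\sum_y b(x,y)(u(x)-u(y))+\frac{c(x)}{m(x)}u(x)$ for $u\in\widetilde F$. ''$L$ is a restriction of $\widetilde L$'' means the domain of $L$ is contained in $\widetilde F$ and $Lu=\widetilde Lu$ there. The form associated to a non-negative selfadjoint $L$ is $Q(u,v)=\langle L^{1/2}u,L^{1/2}v\rangle$ on $D(Q)=D(L^{1/2})$. A symmetric form $Q$ on $\ell^2(V,m)$ with domain $D$ satisfies condition (C) w.r.t. $(b,c)$ if: (C0) $Q$ is non-negative and closed; (C1) $C_c(V)\subseteq D$;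 (C2) for all $u\in D$ and $v\in C_c(V)$ the sum $\sum_x u(x)\overline{\widetilde L v(x)}m(x)$ converges absolutely and equals $Q(u,v)$. *)

From Stdlib Require Import Reals List ClassicalEpsilon.
Open Scope R_scope.
Set Implicit Arguments.

Record Cplx := mkC { re : R; im : R }.
Definition C0 : Cplx := mkC 0 0.
Definition RtoC (r : R) : Cplx := mkC r 0.
Definition Cadd (z w : Cplx) : Cplx := mkC (re z + re w) (im z + im w).
Definition Copp (z : Cplx) : Cplx := mkC (- re z) (- im z).
Definition Csub (z w : Cplx) : Cplx := Cadd z (Copp w).
Definition Cmul (z w : Cplx) : Cplx :=
  mkC (re z * re w - im z * im w) (re z * im w + im z * re w).
Definition Cconj (z : Cplx) : Cplx := mkC (re z) (- im z).
Definition Cnorm (z : Cplx) : R := sqrt (re z * re z + im z * im z).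

(** * Unordered (unconditional) summation over an arbitrary index type *)
Section Sums.
Variable V : Type.

Definition fsumC (F : list V) (f : V -> Cplx) : Cplx := fold_right Cadd C0 (map f F).
Definition fsumR (F : list V) (f : V -> R) : R := fold_right Rplus 0 (map f F).

Definition has_sum (f : V -> Cplx) (s : Cplx) : Prop :=
  forall eps, 0 < eps -> exists F0 : list V, NoDup F0 /\
    forall F : list V, NoDup F -> incl F0 F -> Cnorm (Csub (fsumC F f) s) < eps.

Definition abs_summable (f : V -> Cplx) : Prop :=
  exists M, forall F : list V, NoDup F -> fsumR F (fun x => Cnorm (f x)) <= M.

(* the value of the sum (0 if the sum does not exist) *)
Definition csum (f : V -> Cplx) : Cplx :=
  epsilon (inhabits C0) (fun s => has_sum f s).
End Sums.

Definition countable (V : Type) : Prop :=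
  exists enc : V -> nat, forall x y, enc x = enc y -> x = y.

Section L2.
Variable V : Type.
Variable m : V -> R.

Definition fzero : V -> Cplx := fun _ => C0.
Definition fadd (u v : V -> Cplx) : V -> Cplx := fun x => Cadd (u x) (v x).
Definition fsub (u v : V -> Cplx) : V -> Cplx := fun x => Csub (u x) (v x).
Definition fscale (a : Cplx) (u : V -> Cplx) : V -> Cplx := fun x => Cmul a (u x).

Definition l2 (u : V -> Cplx) : Prop :=
  abs_summable (fun x => Cmul (RtoC (m x)) (Cmul (u x) (Cconj (u x)))).

Definition inner (u v : V -> Cplx) : Cplx :=
  csum (fun x => Cmul (Cmul (u x) (Cconj (v x))) (RtoC (m x))).

Definition l2norm (u : V -> Cplx) : R := sqrt (re (inner u u)).

Definition is_subspace (D : (V -> Cplx) -> Prop) : Prop :=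
  D fzero /\ (forall u v, D u -> D v -> D (fadd u v)) /\
  (forall a u, D u -> D (fscale a u)).

Definition dense (D : (V -> Cplx) -> Prop) : Prop :=
  forall u, l2 u -> forall eps, 0 < eps -> exists d, D d /\ l2norm (fsub u d) < eps.

Definition operator (D : (V -> Cplx) -> Prop) (A : (V -> Cplx) -> (V -> Cplx)) : Prop :=
  is_subspace D /\ (forall u, D u -> l2 u /\ l2 (A u)) /\
  (forall u v, D u -> D v -> A (fadd u v) = fadd (A u) (A v)) /\
  (forall a u, D u -> A (fscale a u) = fscale a (A u)).

Definition selfadjoint (D : (V -> Cplx) -> Prop) (A : (V -> Cplx) -> (V -> Cplx)) : Prop :=
  operator D A /\ dense D /\
  forall v w, l2 v -> l2 w ->
    ((forall u, D u -> inner (A u) v = inner u w) <-> (D v /\ A v = w)).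

Definition nonneg_selfadjoint (D : (V -> Cplx) -> Prop) (A : (V -> Cplx) -> (V -> Cplx)) : Prop :=
  selfadjoint D A /\
  forall u, D u -> im (inner (A u) u) = 0 /\ 0 <= re (inner (A u) u).

Definition is_sqrt (DL : (V -> Cplx) -> Prop) (L : (V -> Cplx) -> (V -> Cplx))
  (DS : (V -> Cplx) -> Prop) (S : (V -> Cplx) -> (V -> Cplx)) : Prop :=
  nonneg_selfadjoint DS S /\
  (forall u, DL u <-> (DS u /\ DS (S u))) /\
  (forall u, DL u -> L u = S (S u)).

Definition form_nonneg (D : (V -> Cplx) -> Prop) (q : (V -> Cplx) -> (V -> Cplx) -> Cplx) : Prop :=
  forall u, D u -> im (q u u) = 0 /\ 0 <= re (q u u).

Definition form_closed (D : (V -> Cplx) -> Prop) (q : (V -> Cplx) -> (V -> Cplx) -> Cplx) : Prop :=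
  forall (u : nat -> V -> Cplx) (ul : V -> Cplx),
    (forall n, D (u n)) -> l2 ul ->
    Un_cv (fun n => l2norm (fsub (u n) ul)) 0 ->
    (forall eps, 0 < eps -> exists N, forall n k, (N <= n)%nat -> (N <= k)%nat ->
        re (q (fsub (u n) (u k)) (fsub (u n) (u k))) < eps) ->
    D ul /\ Un_cv (fun n => re (q (fsub (u n) ul) (fsub (u n) ul))) 0.
End L2.

Section Graph.
Variable V : Type.
Variable m : V -> R.
Variable b : V -> V -> R.
Variable c : V -> R.

Definition is_graph : Prop :=
  (forall x, 0 <= c x) /\ (forall x y, 0 <= b x y) /\ (forall x, b x x = 0) /\
  (forall x y, b x y = b y x) /\ (forall x, abs_summable (fun y => RtoC (b x y))).

Definition Cc (u : V -> Cplx) : Prop :=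
  exists F : list V, forall x, u x <> C0 -> In x F.

Definition Ftilde (u : V -> Cplx) : Prop :=
  forall x, abs_summable (fun y => Cmul (RtoC (b x y)) (u y)).

Definition Ltilde (u : V -> Cplx) : V -> Cplx := fun x =>
  Cadd (Cmul (RtoC (/ m x)) (csum (fun y => Cmul (RtoC (b x y)) (Csub (u x) (u y)))))
       (Cmul (RtoC (c x / m x)) (u x)).

Definition FC : Prop := forall v, Cc v -> l2 m (Ltilde v).

Definition condC (D : (V -> Cplx) -> Prop) (q : (V -> Cplx) -> (V -> Cplx) -> Cplx) : Prop :=
  (form_nonneg D q /\ form_closed m D q) /\
  (forall v, Cc v -> D v) /\
  (forall u v, D u -> Cc v ->
     abs_summable (fun x => Cmul (Cmul (u x) (Cconj (Ltilde v x))) (RtoC (m x))) /\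
     csum (fun x => Cmul (Cmul (u x) (Cconj (Ltilde v x))) (RtoC (m x))) = q u v).

Definition restriction (DL : (V -> Cplx) -> Prop) (L : (V -> Cplx) -> (V -> Cplx)) : Prop :=
  forall u, DL u -> Ftilde u /\ L u = Ltilde u.
End Graph.

From Stdlib Require Import Reals List Permutation ClassicalEpsilon Classical FunctionalExtensionality Lra.
Open Scope R_scope.

(** Let S = L^{1/2}, so that Q(u,v) = <Su,Sv> on D(S).
    - (C) => restriction: for u in D(L), testing condition (C2) against the
      point masses [delta x] shows that u is in F-tilde (absolute summability)
      and that Q(u, delta x) = m(x) (L-tilde u)(x); on the other hand
      Q(u, delta x) = <S S u, delta x> = m(x) (L u)(x).
    - restriction => (C): Green's formula <L-tilde u, v> = <u, L-tilde v>
      (u in F-tilde, v finitely supported) together with selfadjointness of L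
      and (FC) puts C_c(V) into D(L) with L v = L-tilde v; then
      Q(u,v) = <u, S S v> = <u, L-tilde v>.  Closedness of Q is the closedness
      of the graph of the selfadjoint operator S, which uses completeness of
      l^2(V,m). *)

Lemma Ceq : forall z w, re z = re w -> im z = im w -> z = w.
Proof. intros [a b] [c d]; simpl; intros; subst; reflexivity. Qed.

Ltac ceq := apply Ceq; simpl; try ring.

Lemma Cnorm_ge0 z : 0 <= Cnorm z.
Proof. apply sqrt_pos. Qed.

Lemma Cnorm_sq z : Cnorm z * Cnorm z = re z * re z + im z * im z.
Proof. unfold Cnorm. apply sqrt_sqrt. nra. Qed.

Lemma Cnorm_le_of_sq z r : 0 <= r -> re z * re z + im z * im z <= r * r -> Cnorm z <= r.
Proof. intros. unfold Cnorm. rewrite <- (sqrt_square r) by auto. apply sqrt_le_1_alt; auto. Qed.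

Lemma sq_le_Cnorm z r : 0 <= r -> r * r <= re z * re z + im z * im z -> r <= Cnorm z.
Proof. intros. pose proof (Cnorm_sq z). pose proof (Cnorm_ge0 z). nra. Qed.

Lemma Rabs_re_le z : Rabs (re z) <= Cnorm z.
Proof. apply sq_le_Cnorm. apply Rabs_pos. rewrite <- Rabs_mult, Rabs_right by nra. nra. Qed.

Lemma Rabs_im_le z : Rabs (im z) <= Cnorm z.
Proof. apply sq_le_Cnorm. apply Rabs_pos. rewrite <- Rabs_mult, Rabs_right by nra. nra. Qed.

Lemma Cnorm_le_sum z : Cnorm z <= Rabs (re z) + Rabs (im z).
Proof.
  pose proof (Rabs_pos (re z)); pose proof (Rabs_pos (im z)).
  apply Cnorm_le_of_sq; [lra|].
  rewrite <- (Rabs_right (re z * re z)), <- (Rabs_right (im z * im z)), !Rabs_mult by nra.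
  nra.
Qed.

Lemma Cnorm_mul z w : Cnorm (Cmul z w) = Cnorm z * Cnorm w.
Proof. unfold Cnorm. rewrite <- sqrt_mult by nra. f_equal. simpl. ring. Qed.

Lemma Cnorm_RtoC r : Cnorm (RtoC r) = Rabs r.
Proof. unfold Cnorm; simpl. rewrite <- sqrt_Rsqr_abs. f_equal. unfold Rsqr. ring. Qed.

Lemma Cnorm_conj z : Cnorm (Cconj z) = Cnorm z.
Proof. unfold Cnorm; simpl. f_equal. ring. Qed.

Lemma Cnorm_opp z : Cnorm (Copp z) = Cnorm z.
Proof. unfold Cnorm; simpl. f_equal. ring. Qed.

Lemma Cnorm_C0 : Cnorm C0 = 0.
Proof. unfold Cnorm; simpl. replace (0*0+0*0) with 0 by ring. apply sqrt_0. Qed.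

Lemma Cnorm_zero z : Cnorm z = 0 -> z = C0.
Proof. intros H. pose proof (Cnorm_sq z). rewrite H in H0. apply Ceq; simpl; nra. Qed.

Lemma Cnorm_triangle z w : Cnorm (Cadd z w) <= Cnorm z + Cnorm w.
Proof.
  pose proof (Cnorm_sq z) as Ez; pose proof (Cnorm_sq w) as Ew.
  pose proof (Cnorm_ge0 z); pose proof (Cnorm_ge0 w).
  (* Cauchy-Schwarz in R^2 *)
  assert (CS : re z * re w + im z * im w <= Cnorm z * Cnorm w).
  { apply Rsqr_incr_0_var; [|nra]. unfold Rsqr.
    replace (Cnorm z * Cnorm w * (Cnorm z * Cnorm w))
      with ((Cnorm z * Cnorm z) * (Cnorm w * Cnorm w)) by ring.
    rewrite Ez, Ew. pose proof (pow2_ge_0 (re z * im w - im z * re w)). nra. }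
  apply Cnorm_le_of_sq; [lra|]. simpl. nra.
Qed.

Lemma Cmul_RtoC_inj z w r : r <> 0 -> Cmul z (RtoC r) = Cmul w (RtoC r) -> z = w.
Proof.
  intros Hr E. apply Ceq; [apply (f_equal re) in E|apply (f_equal im) in E]; simpl in E;
    apply (Rmult_eq_reg_r r); auto; lra.
Qed.

Lemma Cnorm_sub_sym z w : Cnorm (Csub z w) = Cnorm (Csub w z).
Proof. unfold Cnorm; simpl. f_equal. ring. Qed.

Section FiniteSums.
Variable V : Type.

Definition Vdec (x y : V) : {x = y} + {x <> y} := excluded_middle_informative (x = y).

Lemma fsumR_cons x (F : list V) f : fsumR (x :: F) f = f x + fsumR F f.
Proof. reflexivity. Qed.

Lemma fsumR_nil f : fsumR (@nil V) f = 0.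
Proof. reflexivity. Qed.

Lemma fsumR_app (F G : list V) f : fsumR (F ++ G) f = fsumR F f + fsumR G f.
Proof. induction F; simpl; unfold fsumR in *; simpl; [ring| rewrite IHF; ring]. Qed.

Lemma fsumR_perm (F G : list V) f : Permutation F G -> fsumR F f = fsumR G f.
Proof. induction 1; rewrite ?fsumR_cons; [auto|congruence|ring|congruence]. Qed.

Lemma fsumR_ext (F : list V) f g : (forall x, In x F -> f x = g x) -> fsumR F f = fsumR F g.
Proof.
  induction F; intros H; rewrite ?fsumR_cons; auto.
  rewrite H, IHF; simpl; auto. intros; apply H; simpl; auto.
Qed.

Lemma fsumR_plus (F : list V) f g : fsumR F (fun x => f x + g x) = fsumR F f + fsumR F g.
Proof. induction F; rewrite ?fsumR_cons, ?fsumR_nil; [ring| rewrite IHF; ring]. Qed.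

Lemma fsumR_scal (F : list V) a f : fsumR F (fun x => a * f x) = a * fsumR F f.
Proof. induction F; rewrite ?fsumR_cons, ?fsumR_nil; [ring| rewrite IHF; ring]. Qed.

Lemma fsumR_zero (F : list V) f : (forall x, In x F -> f x = 0) -> fsumR F f = 0.
Proof.
  induction F as [|a F IHF]; intros H; [reflexivity|].
  rewrite fsumR_cons, H, IHF; [ring| |simpl; auto]. intros; apply H; simpl; auto.
Qed.

Lemma fsumR_le (F : list V) f g : (forall x, In x F -> f x <= g x) -> fsumR F f <= fsumR F g.
Proof.
  induction F; intros H; rewrite ?fsumR_cons, ?fsumR_nil; [lra|].
  pose proof (H a (or_introl eq_refl)). pose proof (IHF (fun x h => H x (or_intror h))). lra.
Qed.

Lemma fsumR_nonneg (F : list V) f : (forall x, In x F -> 0 <= f x) -> 0 <= fsumR F f.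
Proof.
  intros H. rewrite <- (fsumR_zero F (fun _ => 0)) by auto. apply fsumR_le; auto.
Qed.

Lemma fsumC_cons x (F : list V) f : fsumC (x :: F) f = Cadd (f x) (fsumC F f).
Proof. reflexivity. Qed.

Lemma re_fsumC (F : list V) f : re (fsumC F f) = fsumR F (fun x => re (f x)).
Proof. induction F; [reflexivity|]. rewrite fsumC_cons, fsumR_cons; simpl. rewrite IHF; auto. Qed.

Lemma im_fsumC (F : list V) f : im (fsumC F f) = fsumR F (fun x => im (f x)).
Proof. induction F; [reflexivity|]. rewrite fsumC_cons, fsumR_cons; simpl. rewrite IHF; auto. Qed.

Lemma Cnorm_fsumC (F : list V) f : Cnorm (fsumC F f) <= fsumR F (fun x => Cnorm (f x)).
Proof.
  induction F.
  - unfold fsumC; simpl. rewrite Cnorm_C0, fsumR_nil; lra.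
  - rewrite fsumC_cons, fsumR_cons. pose proof (Cnorm_triangle (f a) (fsumC F f)). lra.
Qed.

Lemma fsumC_ext (F : list V) f g : (forall x, In x F -> f x = g x) -> fsumC F f = fsumC F g.
Proof. intros H; apply Ceq; rewrite ?re_fsumC, ?im_fsumC; apply fsumR_ext; intros; rewrite H; auto. Qed.

Lemma fsumC_sub (F : list V) f g :
  fsumC F (fun x => Csub (f x) (g x)) = Csub (fsumC F f) (fsumC F g).
Proof. induction F. ceq. rewrite !fsumC_cons, IHF. ceq. Qed.

Lemma fsumC_mul_conj (F : list V) a g :
  Cmul a (Cconj (fsumC F g)) = fsumC F (fun y => Cmul a (Cconj (g y))).
Proof. induction F. ceq. rewrite !fsumC_cons, <- IHF. ceq. Qed.

Lemma union_list (F1 F2 : list V) : exists F, NoDup F /\ incl F1 F /\ incl F2 F.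
Proof.
  exists (nodup Vdec (F1 ++ F2)). split; [apply NoDup_nodup|].
  split; intros x Hx; apply nodup_In; apply in_or_app; auto.
Qed.

Lemma fsumR_split (F G : list V) f : NoDup F -> NoDup G -> incl F G ->
  exists H, NoDup H /\ (forall x, In x H -> ~ In x F) /\
    fsumR G f = fsumR F f + fsumR H f.
Proof.
  intros HF HG HI.
  set (outF := fun x => if excluded_middle_informative (In x F) then false else true).
  set (H := filter outF G).
  assert (Hm : forall x, In x H <-> In x G /\ ~ In x F).
  { intros x. unfold H, outF. rewrite filter_In.
    destruct (excluded_middle_informative (In x F)) as [h|h];
      split; intros [h1 h2]; (discriminate || contradiction || auto). }
  assert (NH : NoDup H) by (apply NoDup_filter; auto).
  assert (P : Permutation G (F ++ H)).
  { apply NoDup_Permutation; auto.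
    - apply NoDup_app; auto. intros x H1 H2. apply Hm in H2; tauto.
    - intros x; rewrite in_app_iff, Hm. split; [|intros [h|[h _]]; auto].
      intros h; destruct (classic (In x F)); tauto. }
  exists H. split; [auto|split].
  - intros x h; apply Hm in h; tauto.
  - rewrite (fsumR_perm _ _ f P), fsumR_app. reflexivity.
Qed.

Lemma fsumR_mono (F G : list V) f : NoDup F -> NoDup G -> incl F G -> (forall x, 0 <= f x) ->
  fsumR F f <= fsumR G f.
Proof.
  intros HF HG HI Hp. destruct (fsumR_split F G f HF HG HI) as [H [_ [_ E]]].
  rewrite E. pose proof (fsumR_nonneg H f (fun x _ => Hp x)). lra.
Qed.

End FiniteSums.

Section RealSums.
Variable V : Type.

Definition hasR (f : V -> R) (s : R) : Prop :=
  forall eps, 0 < eps -> exists F0 : list V, NoDup F0 /\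
    forall F : list V, NoDup F -> incl F0 F -> Rabs (fsumR F f - s) < eps.

Definition absR (f : V -> R) : Prop :=
  exists M, forall F, NoDup F -> fsumR F (fun x => Rabs (f x)) <= M.

Lemma hasR_unique f s t : hasR f s -> hasR f t -> s = t.
Proof.
  intros Hs Ht. apply NNPP; intro Hne.
  assert (He : 0 < Rabs (s - t) / 2)
    by (assert (s - t <> 0) by lra; pose proof (Rabs_pos_lt _ H); lra).
  destruct (Hs _ He) as [F1 [N1 H1]]; destruct (Ht _ He) as [F2 [N2 H2]].
  destruct (union_list V F1 F2) as [F [NF [I1 I2]]].
  specialize (H1 F NF I1); specialize (H2 F NF I2).
  pose proof (Rabs_triang (s - fsumR F f) (fsumR F f - t)).
  replace (s - fsumR F f + (fsumR F f - t)) with (s - t) in H by ring.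
  rewrite Rabs_minus_sym in H1. lra.
Qed.

Lemma hasR_ext f g s : (forall x, f x = g x) -> hasR f s -> hasR g s.
Proof. intros H; replace g with f; auto. apply functional_extensionality; auto. Qed.

Lemma hasR_eq f g s t : hasR f s -> (forall x, f x = g x) -> s = t -> hasR g t.
Proof. intros H1 H2 H3; subst; eapply hasR_ext; eauto. Qed.

Lemma hasR_lin f g s t a a' : hasR f s -> hasR g t ->
  hasR (fun x => a * f x + a' * g x) (a * s + a' * t).
Proof.
  intros Hs Ht eps He.
  set (K := Rabs a + Rabs a' + 1).
  assert (HK : 0 < K) by (unfold K; pose proof (Rabs_pos a); pose proof (Rabs_pos a'); lra).
  assert (He' : 0 < eps / K) by (apply Rdiv_lt_0_compat; auto).
  destruct (Hs _ He') as [F1 [N1 H1]]; destruct (Ht _ He') as [F2 [N2 H2]].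
  destruct (union_list V F1 F2) as [F0 [NF [I1 I2]]].
  exists F0; split; auto. intros F NFF IF.
  specialize (H1 F NFF (incl_tran I1 IF)); specialize (H2 F NFF (incl_tran I2 IF)).
  rewrite fsumR_plus, !fsumR_scal.
  replace (a * fsumR F f + a' * fsumR F g - (a * s + a' * t)) with
    (a * (fsumR F f - s) + a' * (fsumR F g - t)) by ring.
  eapply Rle_lt_trans; [apply Rabs_triang|]. rewrite !Rabs_mult.
  assert (Rabs a * Rabs (fsumR F f - s) <= Rabs a * (eps / K))
    by (apply Rmult_le_compat_l; [apply Rabs_pos|lra]).
  assert (Rabs a' * Rabs (fsumR F g - t) <= Rabs a' * (eps / K))
    by (apply Rmult_le_compat_l; [apply Rabs_pos|lra]).
  assert ((Rabs a + Rabs a') * (eps / K) < K * (eps / K))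
    by (apply Rmult_lt_compat_r; [auto| unfold K; lra]).
  replace (K * (eps / K)) with eps in * by (field; lra). lra.
Qed.

Lemma hasR_finite (F : list V) f : NoDup F -> (forall x, ~ In x F -> f x = 0) ->
  hasR f (fsumR F f).
Proof.
  intros NF Hz eps He. exists F; split; auto. intros G NG IG.
  destruct (fsumR_split V F G f NF NG IG) as [H [NH [HHF E]]].
  rewrite E, (fsumR_zero V H f) by (intros; apply Hz; auto).
  replace (fsumR F f + 0 - fsumR F f) with 0 by ring. rewrite Rabs_R0; auto.
Qed.

(* Monotone convergence: a non-negative family with bounded partial sums
   is summable, with sum the supremum of its partial sums. *)
Lemma hasR_nonneg_sup f M : (forall x, 0 <= f x) -> (forall F, NoDup F -> fsumR F f <= M) ->
  exists s, hasR f s.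
Proof.
  intros Hp HM.
  set (E := fun r => exists F, NoDup F /\ r = fsumR F f).
  assert (Hb : bound E) by (exists M; intros r [F [NF ->]]; auto).
  assert (Hn : exists r, E r) by (exists 0; exists nil; split; [constructor| reflexivity]).
  destruct (completeness E Hb Hn) as [s [Hub Hlub]].
  exists s. intros eps He.
  assert (Hnear : exists F0, NoDup F0 /\ s - eps < fsumR F0 f).
  { apply NNPP; intro Hc. assert (Hup : is_upper_bound E (s - eps)).
    { intros r [F [NF ->]]. apply Rnot_lt_le; intro; apply Hc; eauto. }
    specialize (Hlub _ Hup); lra. }
  destruct Hnear as [F0 [N0 H0]]. exists F0; split; auto. intros F NF IF.
  pose proof (fsumR_mono V F0 F f N0 NF IF Hp).
  assert (fsumR F f <= s) by (apply Hub; exists F; auto).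
  rewrite Rabs_left1 by lra. lra.
Qed.

(* Absolutely summable families are summable (split into positive and
   negative parts). *)
Lemma absR_has f : absR f -> exists s, hasR f s.
Proof.
  intros [M HM].
  destruct (hasR_nonneg_sup (fun x => Rmax (f x) 0) M) as [s1 H1].
  { intros; apply Rmax_r. }
  { intros F NF. eapply Rle_trans; [|apply (HM F NF)]. apply fsumR_le. intros x _.
    unfold Rmax; destruct Rle_dec; [apply Rabs_pos| apply RRle_abs]. }
  destruct (hasR_nonneg_sup (fun x => Rmax (- f x) 0) M) as [s2 H2].
  { intros; apply Rmax_r. }
  { intros F NF. eapply Rle_trans; [|apply (HM F NF)]. apply fsumR_le. intros x _.
    unfold Rmax; destruct Rle_dec; [apply Rabs_pos| rewrite <- Rabs_Ropp; apply RRle_abs]. }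
  exists (1 * s1 + (-1) * s2). eapply hasR_ext; [|apply (hasR_lin _ _ _ _ 1 (-1) H1 H2)].
  intros x; simpl. unfold Rmax; repeat destruct Rle_dec; lra.
Qed.

Lemma hasR_le_bound f s M : hasR f s -> (forall F, NoDup F -> fsumR F f <= M) -> s <= M.
Proof.
  intros Hs HM. apply Rnot_lt_le; intro Hlt.
  destruct (Hs (s - M)) as [F [NF HF]]; [lra|].
  specialize (HF F NF (incl_refl F)). specialize (HM F NF).
  apply Rabs_def2 in HF. lra.
Qed.

Lemma hasR_ge_bound f s M : hasR f s -> (forall F, NoDup F -> M <= fsumR F f) -> M <= s.
Proof.
  intros Hs HM. apply Rnot_lt_le; intro Hlt.
  destruct (Hs (M - s)) as [F [NF HF]]; [lra|].
  specialize (HF F NF (incl_refl F)). specialize (HM F NF).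
  apply Rabs_def2 in HF. lra.
Qed.

Lemma hasR_nonneg_ge f s F : (forall x, 0 <= f x) -> hasR f s -> NoDup F -> fsumR F f <= s.
Proof.
  intros Hp Hs NF. apply Rnot_lt_le; intro Hlt.
  destruct (Hs (fsumR F f - s)) as [F0 [N0 H0]]; [lra|].
  destruct (union_list V F0 F) as [G [NG [I1 I2]]].
  specialize (H0 G NG I1). pose proof (fsumR_mono V F G f NF NG I2 Hp).
  apply Rabs_def2 in H0. lra.
Qed.

End RealSums.

Section ComplexSums.
Variable V : Type.

Lemma has_sum_iff (f : V -> Cplx) s :
  has_sum f s <-> hasR V (fun x => re (f x)) (re s) /\ hasR V (fun x => im (f x)) (im s).
Proof.
  split.
  - intros H; split; intros eps He; destruct (H eps He) as [F0 [N0 H0]]; exists F0; split; auto;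
      intros F NF IF; specialize (H0 F NF IF); eapply Rle_lt_trans; try apply H0.
    + rewrite <- re_fsumC.
      replace (re (fsumC F f) - re s) with (re (Csub (fsumC F f) s)) by (simpl; ring).
      apply Rabs_re_le.
    + rewrite <- im_fsumC.
      replace (im (fsumC F f) - im s) with (im (Csub (fsumC F f) s)) by (simpl; ring).
      apply Rabs_im_le.
  - intros [H1 H2] eps He.
    destruct (H1 (eps/2)) as [F1 [N1 E1]]; [lra|]. destruct (H2 (eps/2)) as [F2 [N2 E2]]; [lra|].
    destruct (union_list V F1 F2) as [F0 [N0 [I1 I2]]]. exists F0; split; auto.
    intros F NF IF. eapply Rle_lt_trans; [apply Cnorm_le_sum|].
    specialize (E1 F NF (incl_tran I1 IF)); specialize (E2 F NF (incl_tran I2 IF)).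
    simpl. rewrite re_fsumC, im_fsumC. unfold Rminus in *. lra.
Qed.

Lemma has_sum_unique (f : V -> Cplx) s t : has_sum f s -> has_sum f t -> s = t.
Proof.
  rewrite !has_sum_iff. intros [Hs1 Hs2] [Ht1 Ht2].
  apply Ceq; eapply hasR_unique; eauto.
Qed.

Lemma csum_spec (f : V -> Cplx) s : has_sum f s -> csum f = s.
Proof. intros H. unfold csum. apply (has_sum_unique f); [apply epsilon_spec|]; eauto. Qed.

Lemma abs_csum (f : V -> Cplx) : abs_summable f -> has_sum f (csum f).
Proof.
  intros [M HM].
  assert (A1 : absR V (fun x => re (f x))).
  { exists M. intros F NF. eapply Rle_trans; [|apply (HM F NF)].
    apply fsumR_le; intros; apply Rabs_re_le. }
  assert (A2 : absR V (fun x => im (f x))).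
  { exists M. intros F NF. eapply Rle_trans; [|apply (HM F NF)].
    apply fsumR_le; intros; apply Rabs_im_le. }
  destruct (absR_has V _ A1) as [s1 H1]. destruct (absR_has V _ A2) as [s2 H2].
  assert (Hs : has_sum f (mkC s1 s2)) by (apply has_sum_iff; simpl; auto).
  rewrite (csum_spec f _ Hs). exact Hs.
Qed.

Lemma has_sum_ext (f g : V -> Cplx) s : (forall x, f x = g x) -> has_sum f s -> has_sum g s.
Proof. intros H; replace g with f; auto. apply functional_extensionality; auto. Qed.

Lemma has_sum_add (f g : V -> Cplx) s t : has_sum f s -> has_sum g t ->
  has_sum (fun x => Cadd (f x) (g x)) (Cadd s t).
Proof.
  rewrite !has_sum_iff. intros [Hs1 Hs2] [Ht1 Ht2]. simpl; split.
  - eapply (hasR_eq V); [apply (hasR_lin V _ _ _ _ 1 1 Hs1 Ht1)|intros; simpl; ring|ring].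
  - eapply (hasR_eq V); [apply (hasR_lin V _ _ _ _ 1 1 Hs2 Ht2)|intros; simpl; ring|ring].
Qed.

Lemma has_sum_scal (f : V -> Cplx) s a : has_sum f s ->
  has_sum (fun x => Cmul a (f x)) (Cmul a s).
Proof.
  rewrite !has_sum_iff. intros [Hs1 Hs2]. simpl; split.
  - eapply (hasR_eq V); [apply (hasR_lin V _ _ _ _ (re a) (- im a) Hs1 Hs2)|intros; simpl; ring|ring].
  - eapply (hasR_eq V); [apply (hasR_lin V _ _ _ _ (re a) (im a) Hs2 Hs1)|intros; simpl; ring|ring].
Qed.

Lemma has_sum_sub (f g : V -> Cplx) s t : has_sum f s -> has_sum g t ->
  has_sum (fun x => Csub (f x) (g x)) (Csub s t).
Proof.
  intros Hs Ht. replace (Csub s t) with (Cadd s (Cmul (RtoC (-1)) t)) by ceq.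
  eapply has_sum_ext; [|apply has_sum_add, has_sum_scal; eauto]. intros; ceq.
Qed.

Lemma has_sum_finite (F : list V) (f : V -> Cplx) : NoDup F -> (forall x, ~ In x F -> f x = C0) ->
  has_sum f (fsumC F f).
Proof.
  intros NF Hz. apply has_sum_iff. rewrite re_fsumC, im_fsumC.
  split; apply hasR_finite; auto; intros x Hx; rewrite (Hz x Hx); reflexivity.
Qed.

Lemma has_sum_single (f : V -> Cplx) x : (forall y, y <> x -> f y = C0) -> has_sum f (f x).
Proof.
  intros H. replace (f x) with (fsumC (x :: nil) f) by (ceq; ring).
  apply has_sum_finite; [repeat constructor; auto|].
  intros y Hy. apply H. intro; subst; apply Hy; simpl; auto.
Qed.

Lemma has_sum_fsum {W : Type} (G : list W) (f : W -> V -> Cplx) (s : W -> Cplx) :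
  (forall y, In y G -> has_sum (f y) (s y)) ->
  has_sum (fun z => fsumC G (fun y => f y z)) (fsumC G s).
Proof.
  induction G; intros H.
  - exact (has_sum_finite nil (fun _ => C0) (NoDup_nil _) (fun _ _ => eq_refl)).
  - apply (has_sum_add (f a) (fun z => fold_right Cadd C0 (map (fun y => f y z) G)));
      [apply H|apply IHG; intros; apply H]; simpl; auto.
Qed.

Lemma has_sum_norm_bound (f : V -> Cplx) s M : has_sum f s ->
  (forall F, NoDup F -> fsumR F (fun x => Cnorm (f x)) <= M) -> Cnorm s <= M.
Proof.
  intros Hs HM. apply Rnot_lt_le; intro Hlt.
  destruct (Hs (Cnorm s - M)) as [F [NF HF]]; [lra|].
  specialize (HF F NF (incl_refl F)). specialize (HM F NF).
  pose proof (Cnorm_fsumC V F f).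
  pose proof (Cnorm_triangle (Csub s (fsumC F f)) (fsumC F f)) as T.
  replace (Cadd (Csub s (fsumC F f)) (fsumC F f)) with s in T by ceq.
  rewrite Cnorm_sub_sym in T. lra.
Qed.

Lemma has_sum_real (f : V -> Cplx) s : has_sum f s -> (forall x, im (f x) = 0) -> im s = 0.
Proof.
  rewrite has_sum_iff. intros [_ H] Hi. apply (hasR_unique V (fun _ => 0)).
  - eapply hasR_ext; [|apply H]. auto.
  - exact (hasR_finite V nil (fun _ => 0) (NoDup_nil _) (fun _ _ => eq_refl)).
Qed.

Lemma has_sum_re_nonneg (f : V -> Cplx) s : has_sum f s -> (forall x, 0 <= re (f x)) -> 0 <= re s.
Proof.
  rewrite has_sum_iff. intros [H _] Hp. apply (hasR_ge_bound V _ _ 0 H).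
  intros; apply fsumR_nonneg; auto.
Qed.

Lemma abs_le (f g : V -> Cplx) : (forall x, Cnorm (f x) <= Cnorm (g x)) ->
  abs_summable g -> abs_summable f.
Proof.
  intros H [M HM]. exists M. intros F NF.
  eapply Rle_trans; [|apply (HM F NF)]. apply fsumR_le; auto.
Qed.

Lemma abs_finite (f : V -> Cplx) (F : list V) : NoDup F -> (forall x, ~ In x F -> f x = C0) ->
  abs_summable f.
Proof.
  intros NF Hz. exists (fsumR F (fun x => Cnorm (f x))). intros G NG.
  destruct (union_list V G F) as [U [NU [IG IF]]].
  apply Rle_trans with (fsumR U (fun x => Cnorm (f x))).
  - apply fsumR_mono; auto. intros; apply Cnorm_ge0.
  - destruct (fsumR_split V F U (fun x => Cnorm (f x)) NF NU IF) as [H [_ [HH E]]].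
    rewrite E, (fsumR_zero V H); [lra|].
    intros x Hx. rewrite Hz by (apply HH; auto). apply Cnorm_C0.
Qed.

End ComplexSums.

(** * The space l^2(V,m) *)

Section L2Space.
Variable V : Type.
Variable m : V -> R.
Hypothesis Hm : forall x, 0 < m x.

Definition inner_term (u v : V -> Cplx) (x : V) : Cplx := Cmul (Cmul (u x) (Cconj (v x))) (RtoC (m x)).
Definition wsq (u : V -> Cplx) (x : V) : R := m x * (Cnorm (u x) * Cnorm (u x)).
Definition norm2 (u : V -> Cplx) : R := re (inner m u u).

Lemma wsq_nonneg u x : 0 <= wsq u x.
Proof. unfold wsq. pose proof (Hm x); pose proof (Cnorm_ge0 (u x)). apply Rmult_le_pos; nra. Qed.

Lemma Cnorm_inner_term u v x : Cnorm (inner_term u v x) = Cnorm (u x) * Cnorm (v x) * m x.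
Proof.
  unfold inner_term. rewrite !Cnorm_mul, Cnorm_conj, Cnorm_RtoC, (Rabs_right (m x)); auto.
  pose proof (Hm x); lra.
Qed.

Lemma inner_term_diag u x : inner_term u u x = RtoC (wsq u x).
Proof. unfold inner_term, wsq. rewrite Cnorm_sq. ceq. Qed.

Lemma l2_iff u : l2 m u <-> exists M, forall F, NoDup F -> fsumR F (wsq u) <= M.
Proof.
  assert (E : forall x, Cnorm (Cmul (RtoC (m x)) (Cmul (u x) (Cconj (u x)))) = wsq u x).
  { intros x. unfold wsq. rewrite !Cnorm_mul, Cnorm_conj, Cnorm_RtoC, Rabs_right; auto.
    pose proof (Hm x); lra. }
  unfold l2, abs_summable. split; intros [M H]; exists M; intros F NF; specialize (H F NF);
    (erewrite fsumR_ext; [apply H|]); intros; simpl; rewrite E; auto.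
Qed.

Lemma inner_term_bound u v x t : 0 < t -> Cnorm (inner_term u v x) <= t * wsq u x + / t * wsq v x.
Proof.
  intros Ht. rewrite Cnorm_inner_term. unfold wsq. pose proof (Hm x).
  pose proof (Cnorm_ge0 (u x)); pose proof (Cnorm_ge0 (v x)).
  set (a := Cnorm (u x)) in *; set (a' := Cnorm (v x)) in *.
  assert (Hab : a * a' <= t * (a * a) + / t * (a' * a')).
  { assert (Hti : t * / t = 1) by (field; lra).
    pose proof (pow2_ge_0 (t * a - a')).
    assert (0 < / t) by (apply Rinv_0_lt_compat; auto).
    assert (2 * t * (a * a') <= t * t * (a * a) + a' * a') by nra.
    assert (/ t * (2 * t * (a * a')) <= / t * (t * t * (a * a) + a' * a'))
      by (apply Rmult_le_compat_l; lra).
    replace (/ t * (2 * t * (a * a'))) with (2 * (a * a')) in * by (field; lra).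
    replace (/ t * (t * t * (a * a) + a' * a')) with (t * (a * a) + / t * (a' * a')) in * by (field; lra).
    nra. }
  nra.
Qed.

Lemma inner_term_abs u v : l2 m u -> l2 m v -> abs_summable (inner_term u v).
Proof.
  rewrite !l2_iff. intros [M1 H1] [M2 H2].
  exists (1 * M1 + / 1 * M2). intros F NF.
  eapply Rle_trans; [apply (fsumR_le V F _ (fun x => 1 * wsq u x + / 1 * wsq v x))|].
  - intros; apply inner_term_bound; lra.
  - rewrite fsumR_plus, !fsumR_scal. specialize (H1 F NF); specialize (H2 F NF).
    rewrite Rinv_1; lra.
Qed.

Lemma inner_has u v : l2 m u -> l2 m v -> has_sum (inner_term u v) (inner m u v).
Proof. intros; apply abs_csum, inner_term_abs; auto. Qed.

Lemma inner_diag_has u : l2 m u -> has_sum (fun x => RtoC (wsq u x)) (inner m u u).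
Proof. intros H. eapply has_sum_ext; [|apply inner_has; auto]. intros; apply inner_term_diag. Qed.

Lemma inner_diag_im u : l2 m u -> im (inner m u u) = 0.
Proof. intros H. eapply has_sum_real; [apply inner_diag_has; auto|]. intros; reflexivity. Qed.

Lemma norm2_nonneg u : l2 m u -> 0 <= norm2 u.
Proof.
  intros H. eapply has_sum_re_nonneg; [apply inner_diag_has; auto|].
  intros; simpl; apply wsq_nonneg.
Qed.

Lemma hasR_wsq u : l2 m u -> hasR V (wsq u) (norm2 u).
Proof. intros H. apply (proj1 (proj1 (has_sum_iff _ _ _) (inner_diag_has u H))). Qed.

Lemma fsum_le_norm2 u F : l2 m u -> NoDup F -> fsumR F (wsq u) <= norm2 u.
Proof. intros H NF. apply hasR_nonneg_ge; auto. apply wsq_nonneg. apply hasR_wsq; auto. Qed.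

Lemma norm2_le u M : l2 m u -> (forall F, NoDup F -> fsumR F (wsq u) <= M) -> norm2 u <= M.
Proof. intros H HM. eapply hasR_le_bound; eauto. apply hasR_wsq; auto. Qed.

Lemma wsq_le_norm2 u x : l2 m u -> wsq u x <= norm2 u.
Proof.
  intros H. pose proof (fsum_le_norm2 u (x :: nil) H) as Hx.
  rewrite fsumR_cons, fsumR_nil in Hx. apply Rle_trans with (wsq u x + 0); [lra|].
  apply Hx. repeat constructor; auto.
Qed.

Lemma inner_bound u v t : 0 < t -> l2 m u -> l2 m v ->
  Cnorm (inner m u v) <= t * norm2 u + / t * norm2 v.
Proof.
  intros Ht Hu Hv. apply (has_sum_norm_bound V (inner_term u v)); [apply inner_has; auto|].
  intros F NF. eapply Rle_trans; [apply (fsumR_le V F _ (fun x => t * wsq u x + / t * wsq v x))|].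
  - intros; apply inner_term_bound; auto.
  - rewrite fsumR_plus, !fsumR_scal.
    pose proof (fsum_le_norm2 u F Hu NF); pose proof (fsum_le_norm2 v F Hv NF).
    assert (0 < / t) by (apply Rinv_0_lt_compat; auto). nra.
Qed.

Lemma inner_small z eps : l2 m z -> 0 < eps ->
  exists delta, 0 < delta /\ forall d, l2 m d -> norm2 d < delta -> Cnorm (inner m z d) < eps.
Proof.
  intros Hz He. pose proof (norm2_nonneg z Hz) as Nz.
  set (t := eps / (2 * (norm2 z + 1))).
  assert (Ht : 0 < t) by (unfold t; apply Rdiv_lt_0_compat; lra).
  assert (Htz : t * norm2 z <= eps / 2).
  { unfold t. apply (Rmult_le_reg_r (2 * (norm2 z + 1))); [lra|]. field_simplify; nra. }
  exists (t * (eps / 2)). split; [nra|]. intros d Hd Nd.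
  eapply Rle_lt_trans; [apply (inner_bound z d t Ht Hz Hd)|].
  assert (/ t * norm2 d < / t * (t * (eps / 2)))
    by (apply Rmult_lt_compat_l; [apply Rinv_0_lt_compat|]; auto).
  replace (/ t * (t * (eps / 2))) with (eps / 2) in * by (field; lra). lra.
Qed.

Lemma wsq_add_le u v x : wsq (fadd u v) x <= 2 * wsq u x + 2 * wsq v x.
Proof.
  unfold wsq, fadd. pose proof (Cnorm_triangle (u x) (v x)). pose proof (Hm x).
  pose proof (Cnorm_ge0 (u x)); pose proof (Cnorm_ge0 (v x)).
  pose proof (Cnorm_ge0 (Cadd (u x) (v x))). pose proof (pow2_ge_0 (Cnorm (u x) - Cnorm (v x))).
  assert (Cnorm (Cadd (u x) (v x)) * Cnorm (Cadd (u x) (v x)) <=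
          2 * (Cnorm (u x) * Cnorm (u x)) + 2 * (Cnorm (v x) * Cnorm (v x))) by nra.
  nra.
Qed.

Lemma l2_add u v : l2 m u -> l2 m v -> l2 m (fadd u v).
Proof.
  rewrite !l2_iff. intros [M1 H1] [M2 H2]. exists (2 * M1 + 2 * M2). intros F NF.
  eapply Rle_trans; [apply (fsumR_le V F _ (fun x => 2 * wsq u x + 2 * wsq v x))|].
  - intros; apply wsq_add_le.
  - rewrite fsumR_plus, !fsumR_scal. specialize (H1 F NF); specialize (H2 F NF). lra.
Qed.

Lemma l2_scale a u : l2 m u -> l2 m (fscale a u).
Proof.
  rewrite !l2_iff. intros [M1 H1]. exists (Cnorm a * Cnorm a * M1). intros F NF.
  erewrite fsumR_ext.
  - rewrite fsumR_scal. apply Rmult_le_compat_l; [pose proof (Cnorm_ge0 a); nra|auto].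
  - intros x _. unfold wsq, fscale. rewrite Cnorm_mul. ring.
Qed.

Lemma fsub_eq (u v : V -> Cplx) : fsub u v = fadd u (fscale (RtoC (-1)) v).
Proof. apply functional_extensionality; intros x. unfold fsub, fadd, fscale. ceq. Qed.

Lemma l2_sub u v : l2 m u -> l2 m v -> l2 m (fsub u v).
Proof. intros; rewrite fsub_eq; apply l2_add; auto; apply l2_scale; auto. Qed.

Lemma inner_sub_r u v w : l2 m u -> l2 m v -> l2 m w ->
  inner m u (fsub v w) = Csub (inner m u v) (inner m u w).
Proof.
  intros Hu Hv Hw. apply csum_spec.
  eapply has_sum_ext; [|apply has_sum_sub; apply inner_has; eauto].
  intros x. unfold inner_term, fsub. ceq.
Qed.

Lemma Cc_nodup (v : V -> Cplx) : Cc v -> exists F, NoDup F /\ forall x, ~ In x F -> v x = C0.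
Proof.
  intros [F HF]. exists (nodup (Vdec V) F). split; [apply NoDup_nodup|].
  intros x Hx. apply NNPP; intro H. apply Hx, nodup_In, HF; auto.
Qed.

Lemma Cc_l2 (v : V -> Cplx) : Cc v -> l2 m v.
Proof.
  intros Hv. destruct (Cc_nodup v Hv) as [F [NF HF]]. apply (abs_finite V _ F NF).
  intros x Hx. rewrite HF by auto. ceq.
Qed.

Lemma inner_finite w v F : NoDup F -> (forall x, ~ In x F -> v x = C0) ->
  inner m w v = fsumC F (inner_term w v).
Proof.
  intros NF HF. apply csum_spec, has_sum_finite; auto.
  intros x Hx. unfold inner_term. rewrite HF by auto. ceq.
Qed.

End L2Space.

(** * Completeness of l^2(V,m) *)

Lemma CV_const a : Un_cv (fun _ : nat => a) a.
Proof. intros eps He. exists 0%nat. intros. unfold R_dist. rewrite Rminus_diag, Rabs_R0; auto. Qed.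

Lemma CV_le_bound (a : nat -> R) l M N : Un_cv a l -> (forall k, (k >= N)%nat -> a k <= M) -> l <= M.
Proof.
  intros Ha HM. apply Rnot_lt_le; intro H.
  destruct (Ha (l - M)) as [N1 H1]; [lra|].
  specialize (H1 (max N N1) (Nat.le_max_r _ _)). specialize (HM (max N N1) (Nat.le_max_l _ _)).
  unfold R_dist in H1. apply Rabs_def2 in H1. lra.
Qed.

Definition limR (u : nat -> R) : R := epsilon (inhabits 0) (fun l => Un_cv u l).

Lemma limR_spec u : Cauchy_crit u -> Un_cv u (limR u).
Proof. intros H. unfold limR. apply epsilon_spec. destruct (R_complete u H) as [l Hl]. eauto. Qed.

Section Completeness.
Variable V : Type.
Variable m : V -> R.
Hypothesis Hm : forall x, 0 < m x.

Definition l2_cauchy (w : nat -> V -> Cplx) : Prop :=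
  forall eps, 0 < eps -> exists N, forall n k, (N <= n)%nat -> (N <= k)%nat ->
    norm2 V m (fsub (w n) (w k)) < eps.

Lemma fsumR_cv (F : list V) (f : nat -> V -> R) (g : V -> R) :
  (forall x, Un_cv (fun k => f k x) (g x)) -> Un_cv (fun k => fsumR F (f k)) (fsumR F g).
Proof.
  induction F; intros H; [exact (CV_const 0)|].
  apply (CV_plus (fun k => f k a) (fun k => fsumR F (f k))); auto.
Qed.

(* Since m(x) > 0, an l^2-Cauchy sequence is Cauchy at every point. *)
Lemma l2_cauchy_pointwise w x : (forall n, l2 m (w n)) -> l2_cauchy w ->
  Cauchy_crit (fun n => re (w n x)) /\ Cauchy_crit (fun n => im (w n x)).
Proof.
  intros Hl Hc.
  assert (Hpt : forall eps, 0 < eps -> exists N, forall n k, (N <= n)%nat -> (N <= k)%nat ->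
             Cnorm (Csub (w n x) (w k x)) < eps).
  { intros eps He. pose proof (Hm x).
    destruct (Hc (eps * eps * m x)) as [N HN]; [apply Rmult_lt_0_compat; nra|].
    exists N. intros n k Hn Hk. specialize (HN n k Hn Hk).
    pose proof (wsq_le_norm2 V m Hm (fsub (w n) (w k)) x (l2_sub V m Hm _ _ (Hl n) (Hl k))) as Hx.
    unfold wsq in Hx. change (fsub (w n) (w k) x) with (Csub (w n x) (w k x)) in Hx. pose proof (Cnorm_ge0 (Csub (w n x) (w k x))).
    set (d := Cnorm (Csub (w n x) (w k x))) in *.
    assert (d * d < eps * eps) by (apply (Rmult_lt_reg_l (m x)); nra).
    nra. }
  split; intros eps He; destruct (Hpt eps He) as [N HN]; exists N; intros n k Hn Hk;
    unfold R_dist; eapply Rle_lt_trans; try apply (HN n k Hn Hk).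
  - replace (re (w n x) - re (w k x)) with (re (Csub (w n x) (w k x))) by (simpl; ring).
    apply Rabs_re_le.
  - replace (im (w n x) - im (w k x)) with (im (Csub (w n x) (w k x))) by (simpl; ring).
    apply Rabs_im_le.
Qed.

Lemma wsq_sub_cv (a : V -> Cplx) (w : nat -> V -> Cplx) (wl : V -> Cplx) x :
  Un_cv (fun k => re (w k x)) (re (wl x)) -> Un_cv (fun k => im (w k x)) (im (wl x)) ->
  Un_cv (fun k => wsq V m (fsub a (w k)) x) (wsq V m (fsub a wl) x).
Proof.
  intros Hre Him. unfold wsq, fsub. rewrite Cnorm_sq.
  apply (Un_cv_ext (fun k => m x * ((re (a x) - re (w k x)) * (re (a x) - re (w k x)) +
                                    (im (a x) - im (w k x)) * (im (a x) - im (w k x))))).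
  { intros k. rewrite Cnorm_sq. simpl. ring. }
  replace (re (Csub (a x) (wl x))) with (re (a x) - re (wl x)) by (simpl; ring).
  replace (im (Csub (a x) (wl x))) with (im (a x) - im (wl x)) by (simpl; ring).
  pose proof (CV_minus _ _ _ _ (CV_const (re (a x))) Hre).
  pose proof (CV_minus _ _ _ _ (CV_const (im (a x))) Him).
  apply CV_mult; [apply CV_const|]. apply CV_plus; apply CV_mult; auto.
Qed.

(* Fatou's lemma for ||.||^2: an eventual bound on ||a - w k||^2 survives
   the pointwise limit k -> oo. *)
Lemma norm2_limit_le a w wl N eps : l2 m a -> (forall k, l2 m (w k)) ->
  (forall x, Un_cv (fun k => re (w k x)) (re (wl x))) ->
  (forall x, Un_cv (fun k => im (w k x)) (im (wl x))) ->
  (forall k, (N <= k)%nat -> norm2 V m (fsub a (w k)) <= eps) ->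
  l2 m (fsub a wl) /\ norm2 V m (fsub a wl) <= eps.
Proof.
  intros Ha Hw Hre Him Hb.
  assert (HF : forall F, NoDup F -> fsumR F (wsq V m (fsub a wl)) <= eps).
  { intros F NF. apply (CV_le_bound (fun k => fsumR F (wsq V m (fsub a (w k)))) _ eps N).
    - apply fsumR_cv. intros x; apply wsq_sub_cv; auto.
    - intros k Hk. eapply Rle_trans; [|apply (Hb k Hk)].
      apply fsum_le_norm2; auto. apply l2_sub; auto. }
  assert (Hl : l2 m (fsub a wl)) by (apply l2_iff; eauto).
  split; [auto|apply norm2_le; auto].
Qed.

Lemma l2_complete (w : nat -> V -> Cplx) : (forall n, l2 m (w n)) -> l2_cauchy w ->
  exists wl, l2 m wl /\ Un_cv (fun n => norm2 V m (fsub (w n) wl)) 0.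
Proof.
  intros Hl Hc.
  set (wl := fun x => mkC (limR (fun n => re (w n x))) (limR (fun n => im (w n x)))).
  assert (Hre : forall x, Un_cv (fun k => re (w k x)) (re (wl x)))
    by (intros x; apply limR_spec, (l2_cauchy_pointwise w x Hl Hc)).
  assert (Him : forall x, Un_cv (fun k => im (w k x)) (im (wl x)))
    by (intros x; apply limR_spec, (l2_cauchy_pointwise w x Hl Hc)).
  assert (Hb : forall eps, 0 < eps -> exists N, forall n, (N <= n)%nat ->
             l2 m (fsub (w n) wl) /\ norm2 V m (fsub (w n) wl) <= eps).
  { intros eps He. destruct (Hc eps He) as [N HN]. exists N. intros n Hn.
    apply (norm2_limit_le _ w wl N); auto. intros k Hk. left; auto. }
  exists wl. split.
  - destruct (Hb 1) as [N HN]; [lra|]. destruct (HN N (Nat.le_refl _)) as [H1 _].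
    replace wl with (fsub (w N) (fsub (w N) wl)); [apply l2_sub; auto|].
    apply functional_extensionality; intros x; unfold fsub; ceq.
  - intros eps He. destruct (Hb (eps / 2)) as [N HN]; [lra|]. exists N. intros n Hn.
    destruct (HN n Hn) as [H1 H2]. pose proof (norm2_nonneg V m Hm _ H1).
    unfold R_dist. rewrite Rminus_0_r, Rabs_right; lra.
Qed.

End Completeness.

(** * Selfadjoint operators *)

Section Selfadjoint.
Variable V : Type.
Variable m : V -> R.
Hypothesis Hm : forall x, 0 < m x.
Variable DS : (V -> Cplx) -> Prop.
Variable S : (V -> Cplx) -> (V -> Cplx).
Hypothesis HS : selfadjoint m DS S.

Lemma S_l2 u : DS u -> l2 m u /\ l2 m (S u).
Proof. destruct HS as [[_ [H _]] _]. auto. Qed.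

Lemma S_symm u w : DS u -> DS w -> inner m (S u) w = inner m u (S w).
Proof.
  intros Hu Hw. destruct HS as [_ [_ Hc]]. destruct (S_l2 w Hw) as [H1 H2].
  apply (proj2 (Hc w (S w) H1 H2)); auto.
Qed.

Lemma S_sub u w : DS u -> DS w -> DS (fsub u w) /\ S (fsub u w) = fsub (S u) (S w).
Proof.
  intros Hu Hw. destruct HS as [[[_ [Hadd Hsc]] [_ [Sadd Ssc]]] _].
  rewrite !fsub_eq. split; [apply Hadd; auto|]. rewrite Sadd, Ssc; auto.
Qed.

(* For z in the domain,
   <Sz,ul> - <z,wl> = <z, S u_n - wl> - <Sz, u_n - ul> is arbitrarily small,
   so the adjoint relation identifies (ul, wl) as a point of the graph. *)
Lemma selfadjoint_closed (u : nat -> V -> Cplx) ul wl :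
  (forall n, DS (u n)) -> l2 m ul -> l2 m wl ->
  Un_cv (fun n => norm2 V m (fsub (u n) ul)) 0 ->
  Un_cv (fun n => norm2 V m (fsub (S (u n)) wl)) 0 ->
  DS ul /\ S ul = wl.
Proof.
  intros Hu Hul Hwl Hcu Hcw.
  assert (Hadj : forall z, DS z -> inner m (S z) ul = inner m z wl).
  { intros z Hz. destruct (S_l2 z Hz) as [Hz1 Hz2].
    set (a := Csub (inner m (S z) ul) (inner m z wl)).
    assert (Ha : forall n, a = Csub (inner m z (fsub (S (u n)) wl)) (inner m (S z) (fsub (u n) ul))).
    { intros n. destruct (S_l2 (u n) (Hu n)) as [H1 H2].
      rewrite !inner_sub_r, <- S_symm; auto. unfold a. ceq. }
    enough (Hsmall : forall eps, 0 < eps -> Cnorm a < eps).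
    { assert (Cnorm a = 0) as H0.
      { pose proof (Cnorm_ge0 a). destruct (Req_dec (Cnorm a) 0) as [|Hne]; auto.
        specialize (Hsmall (Cnorm a)); lra. }
      apply Cnorm_zero in H0. unfold a in H0.
      apply Ceq; [apply (f_equal re) in H0|apply (f_equal im) in H0]; simpl in H0; lra. }
    intros eps He.
    destruct (inner_small V m Hm z (eps / 2) Hz1) as [d1 [Hd1 Hs1]]; [lra|].
    destruct (inner_small V m Hm (S z) (eps / 2) Hz2) as [d2 [Hd2 Hs2]]; [lra|].
    destruct (Hcw d1 Hd1) as [N1 HN1]; destruct (Hcu d2 Hd2) as [N2 HN2].
    set (n := max N1 N2).
    specialize (HN1 n (Nat.le_max_l _ _)); specialize (HN2 n (Nat.le_max_r _ _)).
    unfold R_dist in HN1, HN2. rewrite Rminus_0_r in HN1, HN2.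
    destruct (S_l2 (u n) (Hu n)) as [Hun1 Hun2].
    assert (L1 : l2 m (fsub (S (u n)) wl)) by (apply l2_sub; auto).
    assert (L2 : l2 m (fsub (u n) ul)) by (apply l2_sub; auto).
    specialize (Hs1 _ L1 (Rle_lt_trans _ _ _ (RRle_abs _) HN1)).
    specialize (Hs2 _ L2 (Rle_lt_trans _ _ _ (RRle_abs _) HN2)).
    rewrite (Ha n). unfold Csub.
    pose proof (Cnorm_triangle (inner m z (fsub (S (u n)) wl)) (Copp (inner m (S z) (fsub (u n) ul)))).
    rewrite Cnorm_opp in *. lra. }
  destruct HS as [_ [_ Hc]]. apply (proj1 (Hc ul wl Hul Hwl) Hadj).
Qed.

(* Hence the form Q(u,v) = <Su,Sv> on D(S) is closed: a sequence converging
   in l^2 and Cauchy for Q has S u_n convergent by completeness of l^2. *)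
Lemma S_form_closed : form_closed m DS (fun u v => inner m (S u) (S v)).
Proof.
  intros u ul Hu Hul Hcv Hc.
  assert (Hcu : Un_cv (fun n => norm2 V m (fsub (u n) ul)) 0).
  { apply (Un_cv_ext (fun n => l2norm m (fsub (u n) ul) * l2norm m (fsub (u n) ul))).
    - intros n. apply sqrt_sqrt, norm2_nonneg, l2_sub; auto. apply S_l2; auto.
    - replace 0 with (0 * 0) by ring. apply CV_mult; auto. }
  destruct (l2_complete V m Hm (fun n => S (u n))) as [wl [Hwl Hcw]].
  - intros n; apply S_l2; auto.
  - intros eps He. destruct (Hc eps He) as [N HN]. exists N. intros n k Hn Hk.
    specialize (HN n k Hn Hk). destruct (S_sub (u n) (u k)) as [_ E]; auto.
    rewrite E in HN. exact HN.
  - destruct (selfadjoint_closed u ul wl Hu Hul Hwl Hcu Hcw) as [Dul Sul].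
    split; [auto|].
    apply (Un_cv_ext (fun n => norm2 V m (fsub (S (u n)) wl))); auto.
    intros n. destruct (S_sub (u n) ul) as [_ E]; auto. unfold norm2. rewrite E, Sul. reflexivity.
Qed.

End Selfadjoint.

(** * The formal graph Laplacian *)

Section Laplacian.
Variable V : Type.
Variable m : V -> R.
Variable b : V -> V -> R.
Variable c : V -> R.
Hypothesis Hm : forall x, 0 < m x.
Hypothesis Hg : is_graph b c.

Definition deg (x : V) : R := re (csum (fun y => RtoC (b x y))).

Lemma has_deg x : has_sum (fun y => RtoC (b x y)) (RtoC (deg x)).
Proof.
  destruct Hg as [_ [_ [_ [_ H]]]]. pose proof (abs_csum V _ (H x)) as Hs. unfold deg.
  replace (RtoC (re (csum (fun y => RtoC (b x y))))) with (csum (fun y => RtoC (b x y))); auto.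
  apply Ceq; simpl; auto. eapply has_sum_real; eauto.
Qed.

Lemma Ltilde_formula u x T : has_sum (fun y => Cmul (RtoC (b x y)) (u y)) T ->
  Ltilde m b c u x = Cmul (RtoC (/ m x)) (Csub (Cmul (u x) (RtoC (deg x + c x))) T).
Proof.
  intros HT. unfold Ltilde.
  rewrite (csum_spec V _ (Csub (Cmul (u x) (RtoC (deg x))) T)).
  - ceq; unfold Rdiv; ring.
  - eapply has_sum_ext; [|apply has_sum_sub; [apply has_sum_scal, has_deg| apply HT]].
    intros y; ceq.
Qed.

Lemma Ltilde_Cc v x F : NoDup F -> (forall y, ~ In y F -> v y = C0) ->
  Ltilde m b c v x = Cmul (RtoC (/ m x)) (Csub (Cmul (v x) (RtoC (deg x + c x)))
     (fsumC F (fun y => Cmul (RtoC (b x y)) (v y)))).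
Proof.
  intros NF HF. apply Ltilde_formula, has_sum_finite; auto.
  intros y Hy. rewrite HF; auto. ceq.
Qed.

(* Both sides equal
   sum_{y in supp v} (u(y) conj v(y) (deg(y) + c(y)) - conj v(y) sum_z b(y,z) u(z)),
   using the symmetry of b. *)
Lemma Green u v : Ftilde b u -> Cc v ->
  inner m (Ltilde m b c u) v = inner m u (Ltilde m b c v).
Proof.
  intros Hu Hv. destruct (Cc_nodup V v Hv) as [F [NF HF]].
  assert (Hsym : forall x y, b x y = b y x) by apply Hg.
  set (T := fun y => csum (fun z => Cmul (RtoC (b y z)) (u z))).
  assert (HT : forall y, has_sum (fun z => Cmul (RtoC (b y z)) (u z)) (T y))
    by (intros y; apply abs_csum, Hu).
  set (A := fsumC F (fun z => Cmul (Cmul (u z) (Cconj (v z))) (RtoC (deg z + c z)))).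
  set (B := fsumC F (fun y => Cmul (Cconj (v y)) (T y))).
  transitivity (Csub A B).
  - rewrite (inner_finite V m _ v F NF HF). unfold A, B. rewrite <- fsumC_sub.
    apply fsumC_ext. intros y _. unfold inner_term.
    rewrite (Ltilde_formula u y (T y) (HT y)). pose proof (Hm y).
    apply Ceq; simpl; field; lra.
  - symmetry. apply csum_spec.
    eapply has_sum_ext; [|apply has_sum_sub;
      [apply (has_sum_finite V F (fun z => Cmul (Cmul (u z) (Cconj (v z))) (RtoC (deg z + c z))))
      |apply (has_sum_fsum V F (fun y z => Cmul (Cconj (v y)) (Cmul (RtoC (b y z)) (u z))))]].
    + intros z. symmetry. rewrite (Ltilde_Cc v z F NF HF). pose proof (Hm z).
      set (P := fsumC F (fun y => Cmul (RtoC (b z y)) (v y))).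
      transitivity (Csub (Cmul (Cmul (u z) (Cconj (v z))) (RtoC (deg z + c z))) (Cmul (u z) (Cconj P))).
      * apply Ceq; simpl; field; lra.
      * f_equal. unfold P. rewrite fsumC_mul_conj. apply fsumC_ext.
        intros y _. rewrite (Hsym z y). ceq.
    + auto.
    + intros z Hz. rewrite HF; auto. ceq.
    + intros y _. apply has_sum_scal, HT.
Qed.

Definition delta (x : V) : V -> Cplx := fun y => if Vdec V y x then RtoC 1 else C0.

Lemma delta_Cc x : Cc (delta x).
Proof. exists (x :: nil). intros y Hy. unfold delta in Hy. destruct (Vdec V y x); simpl; auto. Qed.

Lemma delta_supp x : forall y, ~ In y (x :: nil) -> delta x y = C0.
Proof.
  intros y Hy. unfold delta. destruct (Vdec V y x); [|auto].
  subst; exfalso; apply Hy; simpl; auto.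
Qed.

Lemma inner_delta w x : inner m w (delta x) = Cmul (w x) (RtoC (m x)).
Proof.
  rewrite (inner_finite V m w (delta x) (x :: nil)); [|repeat constructor; auto|apply delta_supp].
  unfold fsumC, inner_term, delta; simpl. destruct (Vdec V x x); [ceq|congruence].
Qed.

Lemma inner_term_Ltilde_delta u x y :
  inner_term V m u (Ltilde m b c (delta x)) y =
  Csub (if Vdec V y x then Cmul (u x) (RtoC (deg x + c x)) else C0) (Cmul (RtoC (b x y)) (u y)).
Proof.
  destruct Hg as [_ [_ [Hbxx [Hsym _]]]]. pose proof (Hm y).
  unfold inner_term. rewrite (Ltilde_Cc (delta x) y (x :: nil)); [|repeat constructor; auto|apply delta_supp].
  unfold fsumC, delta; simpl. rewrite (Hsym y x).
  destruct (Vdec V y x) as [->|Hyx]; [rewrite Hbxx|]; destruct (Vdec V x x); try congruence;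
    apply Ceq; simpl; field; lra.
Qed.

Lemma pairing_delta u x :
  abs_summable (inner_term V m u (Ltilde m b c (delta x))) ->
  abs_summable (fun y => Cmul (RtoC (b x y)) (u y)) /\
  csum (inner_term V m u (Ltilde m b c (delta x))) = Cmul (Ltilde m b c u x) (RtoC (m x)).
Proof.
  intros Habs. set (T := csum (fun y => Cmul (RtoC (b x y)) (u y))).
  assert (Hrow : abs_summable (fun y => Cmul (RtoC (b x y)) (u y))).
  { apply (abs_le V _ (inner_term V m u (Ltilde m b c (delta x)))); [intros y|exact Habs]. rewrite inner_term_Ltilde_delta.
    destruct (Vdec V y x) as [->|Hyx].
    - destruct Hg as [_ [_ [Hbxx _]]]. rewrite Hbxx.
      replace (Cmul (RtoC 0) (u x)) with C0 by ceq. rewrite Cnorm_C0. apply Cnorm_ge0.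
    - replace (Csub C0 (Cmul (RtoC (b x y)) (u y))) with (Copp (Cmul (RtoC (b x y)) (u y))) by ceq.
      rewrite Cnorm_opp. apply Rle_refl. }
  split; [auto|]. apply csum_spec.
  rewrite (Ltilde_formula u x T (abs_csum V _ Hrow)). pose proof (Hm x).
  replace (Cmul (Cmul (RtoC (/ m x)) (Csub (Cmul (u x) (RtoC (deg x + c x))) T)) (RtoC (m x)))
    with (Csub (Cmul (u x) (RtoC (deg x + c x))) T) by (apply Ceq; simpl; field; lra).
  eapply has_sum_ext; [intros y; symmetry; apply inner_term_Ltilde_delta|].
  apply has_sum_sub; [|apply abs_csum; auto].
  pose proof (has_sum_single V (fun y => if Vdec V y x then Cmul (u x) (RtoC (deg x + c x)) else C0) x) as Hs.
  simpl in Hs. destruct (Vdec V x x); [|congruence]. apply Hs.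
  intros y Hy. destruct (Vdec V y x); congruence.
Qed.

End Laplacian.

(** * Forms satisfying (C) and restrictions of L-tilde *)

Section Characterisation.
Variable V : Type.
Variable m : V -> R.
Variable b : V -> V -> R.
Variable c : V -> R.
Hypothesis Hm : forall x, 0 < m x.
Hypothesis Hg : is_graph b c.
Variable DL : (V -> Cplx) -> Prop.
Variable L : (V -> Cplx) -> (V -> Cplx).
Variable DS : (V -> Cplx) -> Prop.
Variable S : (V -> Cplx) -> (V -> Cplx).
Hypothesis HSsa : selfadjoint m DS S.
Hypothesis HDL : forall u, DL u <-> (DS u /\ DS (S u)).
Hypothesis HLS : forall u, DL u -> L u = S (S u).

(* (C) implies that L is a restriction of L-tilde: for u in D(L) and any x,
   m(x) (L u)(x) = <S S u, delta x> = Q(u, delta x) = m(x) (L-tilde u)(x). *)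
Lemma condC_restriction :
  condC m b c DS (fun u v => inner m (S u) (S v)) -> restriction m b c DL L.
Proof.
  intros [_ [HC1 HC2]] u Hu. destruct (proj1 (HDL u) Hu) as [HuS HSuS].
  assert (Hx : forall x, abs_summable (fun y => Cmul (RtoC (b x y)) (u y)) /\
                         Cmul (L u x) (RtoC (m x)) = Cmul (Ltilde m b c u x) (RtoC (m x))).
  { intros x. destruct (HC2 u (delta V x) HuS (delta_Cc V x)) as [Habs Hq].
    destruct (pairing_delta V m b c Hm Hg u x Habs) as [Hrow Hpair].
    split; [auto|]. rewrite <- Hpair, <- inner_delta, HLS by auto.
    rewrite (S_symm V m DS S HSsa (S u) (delta V x)) by (auto; apply HC1, delta_Cc).
    exact (eq_sym Hq). }
  split; [intros x; apply Hx|].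
  apply functional_extensionality; intros x.
  apply (Cmul_RtoC_inj _ _ (m x)); [apply Rgt_not_eq, Hm|apply Hx].
Qed.

(* Under (FC), if L restricts L-tilde then finitely supported functions lie
   in D(L) and L v = L-tilde v: by Green's formula L-tilde v represents the
   adjoint functional u |-> <L u, v> on D(L), and L is selfadjoint. *)
Lemma restriction_Cc_domain : selfadjoint m DL L -> FC m b c -> restriction m b c DL L ->
  forall v, Cc v -> DL v /\ L v = Ltilde m b c v.
Proof.
  intros [_ [_ Hadj]] HFC Hres v Hv.
  apply (proj1 (Hadj v (Ltilde m b c v) (Cc_l2 V m v Hv) (HFC v Hv))).
  intros u Hu. destruct (Hres u Hu) as [Hft ->]. apply Green; auto.
Qed.

(* Conversely, under (FC) a restriction of L-tilde has a form satisfying (C):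
   Q(u,v) = <Su, S v> = <u, S S v> = <u, L v> = <u, L-tilde v> for v in C_c(V). *)
Lemma restriction_condC : selfadjoint m DL L -> FC m b c -> restriction m b c DL L ->
  condC m b c DS (fun u v => inner m (S u) (S v)).
Proof.
  intros HLsa HFC Hres.
  pose proof (restriction_Cc_domain HLsa HFC Hres) as HCc.
  split; [split|split].
  - intros u Hu. destruct (S_l2 V m DS S HSsa u Hu) as [_ H2].
    split; [apply inner_diag_im|apply (norm2_nonneg V m Hm)]; auto.
  - apply S_form_closed; auto.
  - intros v Hv. apply HDL, HCc; auto.
  - intros u v Hu Hv. destruct (HCc v Hv) as [HDv HLv].
    destruct (proj1 (HDL v) HDv) as [HvS HSvS].
    split.
    + apply (inner_term_abs V m Hm); [apply (S_l2 V m DS S HSsa)|apply HFC]; auto.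
    + change (inner m u (Ltilde m b c v) = inner m (S u) (S v)).
      rewrite <- HLv, HLS, <- (S_symm V m DS S HSsa) by auto. reflexivity.
Qed.

End Characterisation.

Theorem mainTheorem5 (V : Type) (m : V -> R) (b : V -> V -> R) (c : V -> R)
  (HV : countable V) (Hm : forall x, 0 < m x)
  (Hg : is_graph b c) (HFC : FC m b c)
  (DL : (V -> Cplx) -> Prop) (L : (V -> Cplx) -> (V -> Cplx))
  (HL : nonneg_selfadjoint m DL L)
  (DS : (V -> Cplx) -> Prop) (S : (V -> Cplx) -> (V -> Cplx))
  (HS : is_sqrt m DL L DS S) :
  condC m b c DS (fun u v => inner m (S u) (S v)) <-> restriction m b c DL L.
Proof.
  destruct HS as [[HSsa _] [HDL HLS]]. destruct HL as [HLsa _].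
  split.
  - apply (condC_restriction V m b c Hm Hg DL L DS S HSsa HDL HLS).
  - apply (restriction_condC V m b c Hm Hg DL L DS S HSsa HDL HLS HLsa HFC).
Qed.
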